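(* A nonzero finitely generated $\mathbb{Z}$-module is not isomorphic to the inverse limit of any inverse system, indexed by a countable upward directed poset, of injective $\mathbb{Z}$-modules and surjective homomorphisms.
   Context: For $\mathbb{Z}$-modules, injective is equivalent to divisible. *)

From HB Require Import structures.
From mathcomp Require Import all_boot all_order all_algebra.
Set Implicit Arguments. Unset Strict Implicit. Unset Printing Implicit Defensive.
Import GRing.Theory.
Local Open Scope ring_scope.

Definition fin_gen_zmod (M : zmodType) : Prop :=
  exists s : seq M, forall x : M,
    exists c : seq int, x = \sum_(i < size s) s`_i *~ c`_i.

Definition injective_zmod (E : zmodType) : Prop :=
  forall (A B : zmodType) (f : A -> B) (g : A -> E),
    GRing.zmod_morphism f -> injective f -> GRing.zmod_morphism g ->
    exists h : B -> E, GRing.zmod_morphism h /\ forall a, h (f a) = g a.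

Definition countable_directed_poset (I : Type) (le : I -> I -> bool) : Prop :=
  [/\ (forall i, le i i),
      (forall i j k, le i j -> le j k -> le i k),
      (forall i j, le i j -> le j i -> i = j),
      (forall i j, exists k, le i k && le j k)
    & exists c : I -> nat, injective c].

Definition inverse_system (I : Type) (le : I -> I -> bool)
    (E : I -> zmodType) (phi : forall i j, le i j -> E j -> E i) : Prop :=
  [/\ (forall i j (h : le i j), GRing.zmod_morphism (phi i j h)),
      (forall i (h : le i i) x, phi i i h x = x)
    & (forall i j k (hij : le i j) (hjk : le j k) (hik : le i k) x,
          phi i j hij (phi j k hjk x) = phi i k hik x)].

Definition in_inv_limit (I : Type) (le : I -> I -> bool)
    (E : I -> zmodType) (phi : forall i j, le i j -> E j -> E i)
    (x : forall i, E i) : Prop :=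
  forall i j (h : le i j), phi i j h (x j) = x i.

Definition iso_to_inv_limit (M : zmodType) (I : Type) (le : I -> I -> bool)
    (E : I -> zmodType) (phi : forall i j, le i j -> E j -> E i) : Prop :=
  exists f : M -> forall i, E i,
    [/\ (forall i, GRing.zmod_morphism (fun m => f m i)),
        injective f,
        (forall m, in_inv_limit phi (f m))
      & (forall x, in_inv_limit phi x -> exists m, f m = x)].

(* Injective Z-modules are divisible.  A finitely generated
   divisible Z-module is zero: writing each generator as twice an integer
   combination of the generators gives a relation matrix A = 1 - 2B whose
   determinant is odd, hence nonzero; by Cramer's rule det A annihilates the
   module, and divisibility by det A then kills every element.  On the other
   side, for a surjective inverse system over a countable directed poset every
   projection from the inverse limit is onto: one builds a cofinal chain
   k 0 <= k 1 <= ..., lifts a given element step by step along the chain, and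
   projects the resulting sequence down to every index.  So if the limit were
   isomorphic to a finitely generated M, every E i would be a finitely
   generated (image of M) divisible module, hence zero; then the limit is zero
   and so is M. *)
From HB Require Import structures.
From mathcomp Require Import all_boot all_order all_algebra.
From Stdlib Require Import ClassicalEpsilon FunctionalExtensionality.
Set Implicit Arguments. Unset Strict Implicit. Unset Printing Implicit Defensive.
Import GRing.Theory.
Local Open Scope ring_scope.

(* A function satisfying [GRing.zmod_morphism], packed as an additive map so
   that the library's [raddf*] lemmas apply to it. *)
Definition additive_of (U V : zmodType) (f : U -> V)
    (hf : GRing.zmod_morphism f) : {additive U -> V} :=
  HB.pack f (GRing.isZmodMorphism.Build U V f hf).

Lemma zmod_morphism_comb (U V : zmodType) (f : U -> V)
    (hf : GRing.zmod_morphism f) (s : seq U) (c : seq int) :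
  f (\sum_(i < size s) s`_i *~ c`_i) = \sum_(i < size s) f s`_i *~ c`_i.
Proof.
have -> : f = additive_of hf by [].
by rewrite raddf_sum; apply: eq_bigr => i _; rewrite raddfMz.
Qed.

Lemma fin_gen_image (U V : zmodType) (f : U -> V) :
  GRing.zmod_morphism f -> (forall y, exists x, f x = y) ->
  fin_gen_zmod U -> fin_gen_zmod V.
Proof.
move=> hf hsurj [s hs]; exists (map f s) => y.
have [x <-] := hsurj y; have [c ->] := hs x; exists c.
rewrite zmod_morphism_comb // size_map; apply: eq_bigr => i _.
by rewrite (nth_map 0).
Qed.

Definition divisible_zmod (D : zmodType) : Prop :=
  forall (x : D) (n : nat), (0 < n)%N -> exists y, y *+ n = x.

(* Injective Z-modules are divisible: extend  k |-> k e  along  k |-> k n. *)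
Lemma injective_zmod_divisible (E : zmodType) :
  injective_zmod E -> divisible_zmod E.
Proof.
move=> hE e n n_gt0.
have mul_n_hom : GRing.zmod_morphism (fun x : int => x * n%:Z).
  by move=> x y; rewrite mulrBl.
have mul_n_inj : injective (fun x : int => x * n%:Z).
  by apply: mulIf; rewrite eqz_nat -lt0n.
have mul_e_hom : GRing.zmod_morphism (fun x : int => e *~ x).
  by move=> x y; rewrite mulrzBr.
have [h [hh h_ext]] := hE int int _ _ mul_n_hom mul_n_inj mul_e_hom.
exists (h 1); have := h_ext 1; rewrite mul1r mulr1z => <-.
have -> : h = additive_of hh by [].
by rewrite -raddfMn natz.
Qed.

(* Cramer's rule over Z: if the rows of A are relations among g, i.e.
   sum_i A j i * g i = 0 for every j, then det A annihilates every g i. *)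
Lemma det_annihilates_generators (D : zmodType) (r : nat) (g : 'I_r -> D)
    (A : 'M[int]_r) :
  (forall j, \sum_(i < r) g i *~ A j i = 0) -> forall i, g i *~ \det A = 0.
Proof.
move=> rel i.
have adjA_rel : \sum_(k < r) g k *~ (\adj A *m A) i k = 0.
  under eq_bigr => k _ do rewrite mxE mulrz_sumr.
  rewrite exchange_big /= big1 // => j _.
  under eq_bigr => k _ do rewrite mulrC mulrzA.
  by rewrite -mulrz_suml rel mul0rz.
rewrite mul_adj_mx (bigD1 i) //= mxE eqxx mulr1n big1 ?addr0 // in adjA_rel.
by move=> k /negPf; rewrite mxE eq_sym => ->; rewrite mulr0n mulr0z.
Qed.

(* An integer matrix congruent to the identity modulo 2 is nonsingular:
   its determinant reduces to 1 in Z/2. *)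
Lemma det_one_sub_double_neq0 (r : nat) (B : 'M[int]_r) :
  \det (1%:M - B *+ 2) != 0.
Proof.
apply/eqP => det0.
have red_id : map_mx (intr : {rmorphism int -> 'Z_2}) (1%:M - B *+ 2) = 1%:M.
  have double0 (y : 'Z_2) : y + y = 0 by apply/val_inj; case: y => [[|[|]]].
  apply/matrixP => j i.
  by rewrite !mxE rmorphB rmorphD double0 subr0; case: (j == i).
have := det1 'Z_2 r; rewrite -red_id det_map_mx det0 rmorph0 => /esym/eqP.
by rewrite oner_eq0.
Qed.

Lemma divisible_torsion_trivial (D : zmodType) (d : int) :
  divisible_zmod D -> d != 0 -> (forall x : D, x *~ d = 0) ->
  forall x : D, x = 0.
Proof.
move=> hdiv d_neq0 kill x.
have [y <-] : exists y, y *+ `|d|%N = x by apply: hdiv; rewrite absz_gt0.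
move: (kill y) d_neq0; case: d {kill} => n //= killy _.
by rewrite NegzE mulrNz in killy; apply/eqP; rewrite -oppr_eq0 killy.
Qed.

Lemma fin_gen_divisible_trivial (D : zmodType) :
  fin_gen_zmod D -> divisible_zmod D -> forall x : D, x = 0.
Proof.
move=> [s hs] hdiv; pose r := size s; pose g (i : 'I_r) := s`_i.
have [B halves] : exists B : 'M[int]_r,
    forall j, g j = \sum_(i < r) g i *~ (B j i *+ 2).
  have half_coef (j : 'I_r) : exists c : seq int,
      g j == \sum_(i < r) g i *~ (c`_i *+ 2).
    have [y hy] := hdiv (g j) 2%N isT; have [c hc] := hs y.
    exists c; apply/eqP; rewrite -hy hc -sumrMnl.
    by apply: eq_bigr => i _; rewrite !mulr2n mulrzDr.
  exists (\matrix_(j, i) (xchoose (half_coef j))`_i) => j.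
  rewrite (eqP (xchooseP (half_coef j))).
  by apply: eq_bigr => i _; rewrite mxE.
pose A : 'M[int]_r := 1%:M - B *+ 2.
have relA : forall j, \sum_(i < r) g i *~ A j i = 0.
  move=> j; under eq_bigr => i _ do rewrite !mxE mulrzBr.
  rewrite sumrB -halves (bigD1 j) //= eqxx mulr1z big1 ?addr0 ?subrr //.
  by move=> i /negPf; rewrite eq_sym => ->; rewrite mulr0z.
apply: (divisible_torsion_trivial hdiv (det_one_sub_double_neq0 B)) => x.
have [c ->] := hs x; rewrite mulrz_suml big1 // => i _.
by rewrite mulrzAC (det_annihilates_generators relA) mul0rz.
Qed.

Section SurjectiveInverseLimit.

Variables (I : Type) (le : I -> I -> bool).
Variables (E : I -> zmodType) (phi : forall i j, le i j -> E j -> E i).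
Hypothesis poset : countable_directed_poset le.
Hypothesis system : inverse_system phi.
Hypothesis phi_onto :
  forall i j (h : le i j) (y : E i), exists x : E j, phi h x = y.

(* A countable directed poset has a cofinal chain starting above any i:
   enumerate I and take successive upper bounds. *)
Lemma cofinal_chain (i : I) : exists k : nat -> I,
  [/\ le i (k 0%N), (forall n, le (k n) (k n.+1))
    & forall j, exists n, le j (k n)].
Proof.
case: poset => le_refl _ _ directed [c c_inj].
pose ub a b := proj1_sig (constructive_indefinite_description _ (directed a b)).
have ub_le a b : le a (ub a b) && le b (ub a b).
  exact: proj2_sig (constructive_indefinite_description _ (directed a b)).
pose enum n := epsilon (inhabits i) (fun j => c j = n).
have enumK j : enum (c j) = j.
  apply: c_inj; exact: epsilon_spec (inhabits i) (fun j' => c j' = c j)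
    (ex_intro _ j erefl).
pose k := fix k n := if n is n'.+1 then ub (k n') (enum n') else i.
exists k; split=> [|n|j]; first exact: le_refl.
  by case/andP: (ub_le (k n) (enum n)).
exists (c j).+1; rewrite /= -{1}(enumK j).
by case/andP: (ub_le (k (c j)) (enum (c j))).
Qed.

Variable k : nat -> I.
Hypothesis k_step : forall n, le (k n) (k n.+1).

Lemma chain_le m m' : (m <= m')%N -> le (k m) (k m').
Proof.
case: poset => le_refl le_trans _ _ _.
elim: m' => [|m' IH]; first by rewrite leqn0 => /eqP ->.
rewrite leq_eqVlt => /orP [/eqP -> //| lt_mm'].
exact: le_trans (IH lt_mm') (k_step m').
Qed.

Lemma compatible_chain_lift (y : E (k 0%N)) : exists xs : forall n, E (k n),
  xs 0%N = y /\
  forall m m' (h : le (k m) (k m')), (m <= m')%N -> phi h (xs m') = xs m.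
Proof.
case: system => _ phi_id phi_comp.
have step_onto n (v : E (k n)) : exists w, phi (k_step n) w == v.
  by have [w hw] := phi_onto (k_step n) v; exists w; apply/eqP.
pose lift n v := xchoose (step_onto n v).
pose xs := fix xs n : E (k n) :=
  if n is n'.+1 then lift n' (xs n') else y.
exists xs; split=> // m; elim=> [|m' IH] h.
  by rewrite leqn0 => /eqP e; move: h; rewrite e => h; exact: phi_id.
rewrite leq_eqVlt ltnS => /orP [/eqP e| le_mm'].
  by move: h; rewrite e => h; exact: phi_id.
rewrite -(phi_comp _ _ _ (chain_le le_mm') (k_step m') h) /=.
by rewrite (eqP (xchooseP (step_onto m' (xs m')))) IH.
Qed.

Lemma chain_projection_indep (xs : forall n, E (k n)) :
  (forall m m' (h : le (k m) (k m')), (m <= m')%N -> phi h (xs m') = xs m) ->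
  forall j m m' (h : le j (k m)) (h' : le j (k m')),
    phi h (xs m) = phi h' (xs m').
Proof.
case: system => _ _ phi_comp compat j.
have le_case m m' (h : le j (k m)) (h' : le j (k m')) :
    (m <= m')%N -> phi h (xs m) = phi h' (xs m').
  move=> le_mm'; rewrite -(compat m m' (chain_le le_mm') le_mm').
  by rewrite (phi_comp _ _ _ h (chain_le le_mm') h').
move=> m m' h h'; case: (leqP m m') => [|/ltnW]; first exact: le_case.
by move=> le_m'm; rewrite (le_case _ _ h' h le_m'm).
Qed.

End SurjectiveInverseLimit.

Lemma inv_limit_projection_onto (I : Type) (le : I -> I -> bool)
    (E : I -> zmodType) (phi : forall i j, le i j -> E j -> E i) :
  countable_directed_poset le -> inverse_system phi ->
  (forall i j (h : le i j) (y : E i), exists x : E j, phi i j h x = y) ->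
  forall i (y : E i), exists x, in_inv_limit phi x /\ x i = y.
Proof.
move=> poset system phi_onto i y.
have [k [le_i_k0 k_step cofinal]] := cofinal_chain poset i.
have [y0 y0_y] := phi_onto _ _ le_i_k0 y.
have [xs [xs0 compat]] := compatible_chain_lift poset system phi_onto k_step y0.
have indep := chain_projection_indep poset system k_step compat.
exists (fun j => phi _ _ (xchooseP (cofinal j)) (xs (xchoose (cofinal j)))).
split.
  case: poset system => _ le_trans _ _ _ [_ _ phi_comp] j j' le_jj'.
  rewrite (phi_comp _ _ _ _ _ (le_trans _ _ _ le_jj' (xchooseP (cofinal j')))).
  exact: indep.
by rewrite (indep _ _ 0%N _ le_i_k0) xs0.
Qed.

Theorem mainTheorem9 (M : zmodType) :
  fin_gen_zmod M -> (exists m : M, m != 0) ->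
  forall (I : Type) (le : I -> I -> bool)
         (E : I -> zmodType) (phi : forall i j, le i j -> E j -> E i),
    countable_directed_poset le ->
    inverse_system phi ->
    (forall i, injective_zmod (E i)) ->
    (forall i j (h : le i j), forall y : E i, exists x : E j, phi i j h x = y) ->
    ~ iso_to_inv_limit M phi.
Proof.
move=> M_fg [m0 m0_neq0] I le E phi poset system E_inj phi_onto
  [f [f_hom f_inj _ f_onto]].
(* each E i is a divisible image of M, hence zero *)
have E_trivial i (e : E i) : e = 0.
  have proj_onto (y : E i) : exists m, f m i = y.
    have [x [x_lim <-]] := inv_limit_projection_onto poset system phi_onto y.
    by have [m <-] := f_onto x x_lim; exists m.
  have E_fg := fin_gen_image (f_hom i) proj_onto M_fg.
  exact: fin_gen_divisible_trivial E_fg (injective_zmod_divisible (E_inj i)) e.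
have : f m0 = f 0.
  by apply: functional_extensionality_dep => i; rewrite (E_trivial _ (f m0 i)).
by move/f_inj/eqP; rewrite (negPf m0_neq0).
Qed.
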